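(* If a Moksha-Patam board has no chute-barrier (i.e. there is no cell $c$ such that $c,c+1,\dots,c+5$ are all entrances of chutes), then the board is ultimately winnable: starting from cell $1$, the chain reaches cell $100$ with probability $1$.
   Context: A Moksha-Patam board consists of the cells $1,\dots,100$ together with a finite set of components; a component is an ordered pair $(a,b)$ of distinct cells, $a$ being its entrance and $b$ its exit; it is a ladder if $a<b$ and a chute if $a>b$. Conventions: distinct components have distinct entrances; no cell is both an entrance and an exit; cells $1$ and $100$ are neither entrances nor exits (components may share exits). The associated Markov chain has state space $\{1,\dots,100\}$ and transition probabilities defined as follows: $p_{100,100}=1$; for $i<100$ and each die value $d\in\{1,\dots,6\}$ (each with probability $1/6$), if $i+d>100$ the chain stays at $i$; otherwise, with $j=i+d$, the chain moves to $b$ if $j$ is the entrance of a component $(j,b)$ and to $j$ otherwise. The game starts at state $1$. The board is ultimately winnable if the chain started at $1$ reaches $100$ with probability $1$. A chute-barrier is a collection of six or more chutes whose entrances are consecutive cells. *)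

(* probabilities are rationals (all transition probabilities are
   multiples of 1/6). *)
From mathcomp Require Import all_boot all_order all_algebra.
Set Implicit Arguments. Unset Strict Implicit. Unset Printing Implicit Defensive.
Import Order.TTheory GRing.Theory Num.Theory.

Definition board := seq (nat * nat).

Definition is_cell (c : nat) : bool := (1 <= c <= 100)%N.

Definition entrances (B : board) : seq nat := map fst B.
Definition exits (B : board) : seq nat := map snd B.

Definition is_ladder (e : nat * nat) : bool := (e.1 < e.2)%N.
Definition is_chute (e : nat * nat) : bool := (e.2 < e.1)%N.

Definition valid_board (B : board) : Prop :=
  [/\ (forall e, e \in B -> [/\ is_cell e.1, is_cell e.2 & e.1 != e.2]),
      uniq (entrances B),
      (forall c, c \in entrances B -> c \notin exits B),
      (1 \notin entrances B) /\ (1 \notin exits B) &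
      (100 \notin entrances B) /\ (100 \notin exits B)].

Definition follow (B : board) (j : nat) : nat :=
  if has (fun e : nat * nat => e.1 == j) B
  then (nth (0, 0) B (find (fun e : nat * nat => e.1 == j) B)).2
  else j.

Definition dest (B : board) (i d : nat) : nat :=
  if (100 < i + d)%N then i else follow B (i + d).

Local Open Scope ring_scope.

Definition trans (B : board) (i k : nat) : rat :=
  if i == 100%N then (k == 100%N)%:R
  else (\sum_(1 <= d < 7) ((dest B i d == k)%:R : rat)) / 6%:R.

(* hit B n i = probability that the chain started at i is at 100 at time n,
   i.e. (P^n)_{i,100}; since 100 is absorbing this is the probability of
   reaching 100 within n steps. *)
Fixpoint hit (B : board) (n i : nat) : rat :=
  match n with
  | 0 => (i == 100%N)%:R
  | n'.+1 => \sum_(1 <= k < 101) trans B i k * hit B n' k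
  end.

Definition ultimately_winnable (B : board) : Prop :=
  forall eps : rat, 0 < eps ->
    exists N : nat, forall n : nat, (N <= n)%N -> `|1 - hit B n 1| < eps.

Definition has_chute_barrier (B : board) : Prop :=
  exists c : nat, forall k : nat, (k < 6)%N ->
    exists e, e \in B /\ e.1 = (c + k)%N /\ is_chute e.

(* From every cell i < 100 some die value moves the token strictly forward:
   otherwise the six cells i+1, ..., i+6 (all on the board once i < 94) would
   be chute entrances, a chute-barrier, and from i >= 94 the value 100 - i
   wins outright.  Following such a move at every step, the token reaches 100
   within 99 moves with probability at least 6^-99, from any cell and at any
   time.  Hence the probability of not having reached 100 after 99 m moves is
   at most (1 - 6^-99)^m, which tends to 0. *)
From mathcomp Require Import all_boot all_order all_algebra.
From mathcomp Require Import zify ring lra.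
Import Order.TTheory GRing.Theory Num.Theory.
Set Implicit Arguments. Unset Strict Implicit.
Local Open Scope ring_scope.

Lemma sum_indicator (R : nzSemiRingType) (r : seq nat) (x : nat) (F : nat -> R) :
  uniq r -> x \in r -> \sum_(k <- r) (x == k)%:R * F k = F x.
Proof.
move=> r_uniq x_in_r; rewrite (bigD1_seq x) //= eqxx mul1r big1 ?addr0 //.
by move=> k; rewrite eq_sym => /negbTE ->; rewrite mul0r.
Qed.

Lemma natr_invXn_gt0_le1 (R : numFieldType) (b k : nat) :
  (0 < b)%N -> 0 < (b%:R : R) ^- k <= 1.
Proof.
move=> b_gt0; have bX_gt0 : 0 < (b%:R : R) ^+ k by rewrite exprn_gt0 ?ltr0n.
by rewrite invr_gt0 bX_gt0 invf_le1 // exprn_ege1 // ler1n.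
Qed.

Lemma bernoulli_subr (R : realDomainType) (x : R) (n : nat) :
  0 <= x <= 1 -> (1 - x) ^+ n * (1 + n%:R * x) <= 1.
Proof.
case/andP=> x_ge0 x_le1; elim: n => [|n IHn]; first by rewrite expr0 mul0r addr0 mul1r.
have y_ge0 : 0 <= (1 - x) ^+ n by rewrite exprn_ge0 // subr_ge0.
move: IHn y_ge0; rewrite exprS -natr1; set y := (1 - x) ^+ n => IHn y_ge0.
have : 0 <= y * ((n%:R + 1) * x * x) by rewrite !mulr_ge0 ?addr_ge0.
have -> : (1 - x) * y * (1 + (n%:R + 1) * x) = y * (1 + n%:R * x) - y * ((n%:R + 1) * x * x).
  by ring.
lra.
Qed.

Lemma geometric_lt_eps (R : archiRealFieldType) (q eps : R) :
  0 <= q < 1 -> 0 < eps -> exists m, q ^+ m < eps.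
Proof.
case/andP=> q_ge0 q_lt1 eps_gt0; set del := 1 - q.
have del_gt0 : 0 < del by rewrite subr_gt0.
have epsdel_gt0 : 0 < eps * del by rewrite mulr_gt0.
have inv_ge0 : 0 <= (eps * del)^-1 by rewrite invr_ge0 ltW.
exists (Num.bound (eps * del)^-1).
have := archi_boundP inv_ge0; set m := Num.bound _ => m_large.
have del_01 : 0 <= del <= 1 by rewrite /del; apply/andP; split; lra.
have bern := bernoulli_subr m del_01.
rewrite (_ : 1 - del = q) in bern; last by rewrite /del; ring.
have : eps * del * (eps * del)^-1 < eps * del * m%:R by rewrite ltr_pM2l.
rewrite mulfV ?gt_eqF // -mulrA [del * _]mulrC => mdel_gt1.
have mdel_ge0 : 0 <= m%:R * del by rewrite mulr_ge0 ?ltW.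
rewrite ltNge; apply/negP => eps_le_qm.
have : eps * (1 + m%:R * del) <= q ^+ m * (1 + m%:R * del) by rewrite ler_wpM2r ?addr_ge0.
lra.
Qed.

Section DieAverage.

Variable R : numFieldType.

Definition die_avg (g : nat -> R) : R := (\sum_(1 <= d < 7) g d) / 6%:R.

Lemma die_avg_le (g h : nat -> R) :
  (forall d, (1 <= d < 7)%N -> g d <= h d) -> die_avg g <= die_avg h.
Proof. by move=> gh; rewrite ler_pM2r ?invr_gt0 ?ltr0n //; apply: ler_sum_nat. Qed.

Lemma die_avg_cst (c : R) : die_avg (fun=> c) = c.
Proof. by rewrite /die_avg sumr_const_nat -[c *+ _]mulr_natr mulfK ?pnatr_eq0. Qed.

Lemma die_avg_sub (c : R) (g : nat -> R) :
  die_avg (fun d => c - g d) = c - die_avg g.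
Proof. by rewrite /die_avg sumrB mulrBl -[_ / _]/(die_avg (fun=> c)) die_avg_cst. Qed.

Lemma die_avg_le_drop (g : nat -> R) (M a : R) (d0 : nat) :
  (forall d, (1 <= d < 7)%N -> g d <= M) -> (1 <= d0 < 7)%N -> g d0 <= M - a ->
  die_avg g <= M - a / 6%:R.
Proof.
move=> g_le d0_die g_d0.
apply: (le_trans (die_avg_le (h := fun d => M - (d0 == d)%:R * a) _)).
  by move=> d d_die; case: eqP => [<-|_]; rewrite ?mul1r // mul0r subr0 g_le.
by rewrite die_avg_sub /die_avg sum_indicator ?iota_uniq ?mem_index_iota.
Qed.

End DieAverage.

Section Board.

Variable B : board.

Lemma follow_cases (j : nat) :
  follow B j = j \/ exists2 e, e \in B & e.1 = j /\ follow B j = e.2.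
Proof.
rewrite /follow; case: ifP => has_j; [right | by left].
exists (nth (0, 0) B (find (fun e : nat * nat => e.1 == j) B)) => //.
  by rewrite mem_nth // -has_find.
by split=> //; apply/eqP; apply: (nth_find (0, 0) has_j).
Qed.

Lemma follow_ge (j : nat) :
  (forall e, e \in B -> e.1 = j -> ~~ is_chute e) -> (j <= follow B j)%N.
Proof.
move=> no_chute; have [-> //|[e e_in [e1 ->]]] := follow_cases j.
by rewrite -e1 leqNgt; apply: no_chute.
Qed.

Lemma no_barrier_gap : ~ has_chute_barrier B -> forall c : nat,
  exists2 k, (k < 6)%N & forall e, e \in B -> e.1 = (c + k)%N -> ~~ is_chute e.
Proof.
move=> no_barrier c.
have : ~~ [forall k : 'I_6, has (fun e => (e.1 == c + k)%N && is_chute e) B].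
  apply/forallP => barrier; apply: no_barrier; exists c => k k_lt6.
  have /hasP[e e_in /andP[/eqP e1 chute]] := barrier (Ordinal k_lt6).
  by exists e.
case/forallPn => k /hasPn gap; exists (val k) => [|e e_in e1]; first exact: ltn_ord.
by have := gap e e_in; rewrite e1 eqxx.
Qed.

Hypothesis B_valid : valid_board B.

Lemma dest_cell (i d : nat) : is_cell i -> (0 < d)%N -> is_cell (dest B i d).
Proof.
case: B_valid => comp_cells _ _ _ _ i_cell d_gt0; rewrite /dest; case: ifP => // le100.
have [->|[e e_in [e1 ->]]] := follow_cases (i + d); last by case: (comp_cells e e_in).
by move: i_cell le100; rewrite /is_cell; lia.
Qed.

Lemma dest_progress (i : nat) : ~ has_chute_barrier B -> is_cell i -> i != 100%N ->
  exists2 d, (1 <= d < 7)%N & (i < dest B i d)%N.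
Proof.
case: B_valid => _ _ _ _ [not_entry100 _] no_barrier i_cell i_ne100.
have i_lt100 : (i < 100)%N by move: i_cell i_ne100; rewrite /is_cell; lia.
have [i_ge94 | i_lt94] := leqP 94 i.
  exists (100 - i)%N; first lia.
  rewrite /dest ifF; last lia.
  rewrite subnKC ?(ltnW i_lt100) //; apply: leq_trans (follow_ge _) => // e e_in e1.
  by move: not_entry100; rewrite -e1 (map_f fst e_in).
have [k k_lt6 gap] := no_barrier_gap no_barrier i.+1.
exists k.+1; first lia.
rewrite /dest ifF; last lia.
apply: leq_trans (follow_ge _) => [|e e_in e1]; first lia.
by apply: gap => //; lia.
Qed.

End Board.

Section Chain.

Variable B : board.

Lemma hit_100 (n : nat) : hit B n 100 = 1.
Proof.
elim: n => [|n IHn] //=; rewrite /trans eqxx.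
under eq_bigr do rewrite eq_sym.
by rewrite sum_indicator ?iota_uniq ?mem_index_iota.
Qed.

Hypothesis B_valid : valid_board B.

Lemma hit_step (n i : nat) : is_cell i -> i != 100%N ->
  hit B n.+1 i = die_avg (fun d => hit B n (dest B i d)).
Proof.
move=> i_cell i_ne100; rewrite /= /trans (negbTE i_ne100) /die_avg.
under eq_bigr do rewrite mulrAC.
rewrite -mulr_suml; congr (_ / _).
under eq_bigr do rewrite big_distrl.
rewrite exchange_big; apply: eq_big_nat => d /andP[d_ge1 _].
have := dest_cell B_valid i_cell d_ge1; rewrite /is_cell => dest_cell.
by rewrite sum_indicator ?iota_uniq ?mem_index_iota.
Qed.

Definition miss (n i : nat) : rat := 1 - hit B n i.

Lemma miss_100 (n : nat) : miss n 100 = 0.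
Proof. by rewrite /miss hit_100 subrr. Qed.

Lemma miss_step (n i : nat) : is_cell i -> i != 100%N ->
  miss n.+1 i = die_avg (fun d => miss n (dest B i d)).
Proof. by move=> i_cell i_ne100; rewrite die_avg_sub /miss hit_step. Qed.

Lemma miss_bounds (n i : nat) : is_cell i -> 0 <= miss n i <= 1.
Proof.
elim: n i => [|n IHn] i i_cell.
  by rewrite /miss /=; case: eqP; rewrite ?subrr ?subr0 lexx ler01.
have [->|i_ne100] := eqVneq i 100%N; first by rewrite miss_100 lexx ler01.
rewrite miss_step //; have dest_bounds d : (1 <= d < 7)%N -> 0 <= miss n (dest B i d) <= 1.
  by case/andP=> d_ge1 _; apply: IHn; apply: dest_cell.
apply/andP; split; [rewrite -(die_avg_cst 0) | rewrite -(die_avg_cst 1)];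
  by apply: die_avg_le => d /dest_bounds /andP[].
Qed.

Lemma miss_nonincreasing (n i : nat) : is_cell i -> miss n.+1 i <= miss n i.
Proof.
elim: n i => [|n IHn] i i_cell; have [->|i_ne100] := eqVneq i 100%N;
  rewrite ?miss_100 //.
  have -> : miss 0 i = 1 by rewrite /miss /= (negbTE i_ne100) subr0.
  by case/andP: (miss_bounds 1 i_cell).
rewrite !miss_step //; apply: die_avg_le => d /andP[d_ge1 _].
by apply: IHn; apply: dest_cell.
Qed.

Lemma miss_le_mono (m n i : nat) : (m <= n)%N -> is_cell i -> miss n i <= miss m i.
Proof.
move=> /subnKC <- i_cell; elim: (n - m)%N => [|k IHk]; first by rewrite addn0.
by rewrite addnS (le_trans (miss_nonincreasing _ i_cell)).
Qed.

End Chain.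

Section Contraction.

Variable B : board.
Hypotheses (B_valid : valid_board B) (B_no_barrier : ~ has_chute_barrier B).

Lemma miss_contract (n : nat) (M : rat) (k i : nat) :
  (forall j, is_cell j -> miss B n j <= M) -> is_cell i -> (100 - i <= k)%N ->
  miss B (n + k) i <= (1 - 6%:R ^- k) * M.
Proof.
move=> miss_le_M; have M_ge0 : 0 <= M.
  by apply: le_trans (miss_le_M 1%N isT); case/andP: (miss_bounds B_valid n (isT : is_cell 1)).
elim: k i => [|k IHk] i i_cell i_near.
  have -> : i = 100%N by move: i_cell i_near; rewrite /is_cell; lia.
  by rewrite miss_100 expr0 invr1 subrr mul0r.
have [->|i_ne100] := eqVneq i 100%N.
  rewrite miss_100 mulr_ge0 // subr_ge0.
  by case/andP: (natr_invXn_gt0_le1 rat k.+1 (isT : (0 < 6)%N)).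
have [d0 d0_die d0_forward] := dest_progress B_valid B_no_barrier i_cell i_ne100.
rewrite addnS miss_step //.
have -> : (1 - 6%:R ^- k.+1) * M = M - 6%:R ^- k * M / 6%:R.
  by rewrite exprS invfM; ring.
apply: (die_avg_le_drop _ d0_die) => [d /andP[d_ge1 _]|].
  apply: le_trans (miss_le_mono B_valid (leq_addr k n) (dest_cell B_valid i_cell d_ge1)) _.
  exact/miss_le_M/dest_cell.
rewrite -[X in _ <= X - _]mul1r -mulrBl; apply: IHk.
  by case/andP: d0_die => d0_ge1 _; apply: dest_cell.
by move: i_near d0_forward; lia.
Qed.

Lemma miss_geometric (m i : nat) : is_cell i -> miss B (99 * m) i <= (1 - 6%:R ^- 99) ^+ m.
Proof.
elim: m i => [|m IHm] i i_cell.
  by rewrite muln0 expr0; case/andP: (miss_bounds B_valid 0 i_cell).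
rewrite mulnS addnC exprS; apply: (miss_contract IHm i_cell).
by move: i_cell; rewrite /is_cell; lia.
Qed.

End Contraction.

Theorem mainTheorem6 (B : board) :
  valid_board B -> ~ has_chute_barrier B -> ultimately_winnable B.
Proof.
move=> B_valid B_no_barrier eps eps_gt0.
(* Bounds on 6^-99 must not stay in the context: [exists] and [done] would
   then try to decide them by evaluating 6^99 in [rat]. *)
have [m qm_lt_eps] : exists m, (1 - (6%:R : rat) ^- 99) ^+ m < eps.
  apply: geometric_lt_eps eps_gt0.
  have [w_gt0 w_le1] := andP (natr_invXn_gt0_le1 rat 99 (isT : (0 < 6)%N)).
  apply/andP; split; [rewrite subr_ge0; exact: w_le1 | rewrite gtrBl; exact: w_gt0].
exists (99 * m)%N => n n_ge; have one_cell : is_cell 1 by [].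
rewrite -/(miss B n 1) ger0_norm; last by case/andP: (miss_bounds B_valid n one_cell).
apply: le_lt_trans qm_lt_eps; apply: le_trans (miss_le_mono B_valid n_ge one_cell) _.
exact: miss_geometric.
Qed.
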